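(* Let $V$ be of class $\mathcal{C}^1$ and let $z$ be a saddle of $V$. Then $\nabla V(z)=0$.
   Context: $V:\mathbb{R}^d\to\mathbb{R}$ is a continuous potential, bounded below, with exponentially tight level sets. Communication height: $\overline V(x,y)=\inf_{\gamma}\sup_{t\in[0,1]}V(\gamma(t))$, the infimum over continuous paths $\gamma:[0,1]\to\mathbb{R}^d$ from $x$ to $y$. Closed valley $\mathcal{C}(x)=\{y:\overline V(y,x)=V(x)\}$, open valley $\mathcal{O}(x)=\{y\in\mathcal{C}(x):V(y)<V(x)\}$; $\mathcal{B}_\eta(x)$ is the open ball of radius $\eta$ about $x$. A point $z$ is a saddle if there is $\eta>0$ such that (i) $\mathcal{O}(z)\cap\mathcal{B}_\eta(z)$ is non-empty and not path-connected, and (ii) $(\mathcal{O}(z)\cup\{z\})\cap\mathcal{B}_\eta(z)$ is path-connected. *)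

From HB Require Import structures.
From mathcomp Require Import all_boot all_order all_algebra.
From mathcomp Require Import all_classical all_reals all_analysis.
Set Implicit Arguments. Unset Strict Implicit. Unset Printing Implicit Defensive.
Import Order.TTheory GRing.Theory Num.Theory.
Import numFieldNormedType.Exports.
Local Open Scope classical_set_scope.
Local Open Scope ring_scope.

Section Defs.
Variables (R : realType) (d : nat).
Notation E := 'rV[R]_d.

Definition basis_vec (i : 'I_d) : E := delta_mx 0 i.

Definition grad (V : E -> R) (x : E) : E :=
  \row_i ('D_(basis_vec i) V x).

Definition C1 (V : E -> R) : Prop :=
  (forall x, differentiable V x) /\
  (forall i : 'I_d, continuous (fun x => 'D_(basis_vec i) V x)).

Definition cpath (x y : E) (g : R -> E) : Prop :=
  {within `[0, 1], continuous g} /\ g 0 = x /\ g 1 = y.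

Definition comm_height (V : E -> R) (x y : E) : \bar R :=
  ereal_inf [set ereal_sup [set (V (g t))%:E | t in `[0, 1]] | g in cpath x y].

Definition closed_valley (V : E -> R) (x : E) : set E :=
  [set y | comm_height V y x = (V x)%:E].

Definition open_valley (V : E -> R) (x : E) : set E :=
  [set y | closed_valley V x y /\ V y < V x].

Definition eball (z : E) (eta : R) : set E :=
  [set y | \sum_(i < d) ((y - z) 0 i) ^+ 2 < eta ^+ 2].

Definition path_connected (A : set E) : Prop :=
  forall x y, A x -> A y ->
    exists g : R -> E, cpath x y g /\ (forall t, 0 <= t <= 1 -> A (g t)).

Definition is_saddle (V : E -> R) (z : E) : Prop :=
  exists eta : R, 0 < eta /\
    (open_valley V z `&` eball z eta !=set0) /\
    ~ path_connected (open_valley V z `&` eball z eta) /\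
    path_connected ((open_valley V z `|` [set z]) `&` eball z eta).

End Defs.

From HB Require Import structures.
From mathcomp Require Import all_boot all_order all_algebra.
From mathcomp Require Import all_classical all_reals all_analysis.
From mathcomp Require Import ring lra.
Set Implicit Arguments. Unset Strict Implicit. Unset Printing Implicit Defensive.
Import Order.TTheory GRing.Theory Num.Theory.
Import numFieldNormedType.Exports.
Local Open Scope classical_set_scope.
Local Open Scope ring_scope.

(* Suppose u := grad V z <> 0.  By continuity of the partial derivatives, V
   decreases along -u at a uniform first-order rate near z, so the point
   h := z - s u with |h - z| = rho / 2 satisfies: every p in the rho-ball with
   V p < V z is joined to h by a straight segment staying in the ball and
   strictly below the level V z, and the segment from h to z stays at or below
   V z.  Hence the part of the rho-ball below V z lies in the open valley of z
   and is path-connected.  With O the open valley and B the eta-ball of the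
   saddle condition, a path in (O u {z}) n B between two points of O n B can
   then be rerouted around z: cut it just before it first reaches z from
   either end and join the two cut points through h.  So O n B would be
   path-connected, contradicting the definition of a saddle. *)

Section Joinable.
Variables (R : realType) (U : normedModType R).
Implicit Types (A B : set U) (p q z : U).

Definition joinable A p q := exists g : R -> U,
  [/\ continuous g, g 0 = p, g 1 = q & forall t, 0 <= t <= 1 -> A (g t)].

Lemma joinable_sub A B p q : A `<=` B -> joinable A p q -> joinable B p q.
Proof. by move=> AB [g [gc g0 g1 gA]]; exists g; split=> // t /gA/AB. Qed.

Lemma joinable_end A p q : joinable A p q -> A q.
Proof. by move=> [g [_ _ <- gA]]; apply: gA; rewrite ler01 lexx. Qed.

Lemma joinable_sym A p q : joinable A p q -> joinable A q p.
Proof.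
move=> [g [gc g0 g1 gA]]; exists (fun t => g (1 - t)); split.
- move=> t; apply: continuous_comp; last exact: gc.
  by apply: cvgB; [exact: cvg_cst | exact: cvg_id].
- by rewrite subr0.
- by rewrite subrr.
- by move=> t /andP[t0 t1]; apply: gA; apply/andP; split; lra.
Qed.

(* Both halves run at double speed; subtracting [g 1 = h 0] makes the sum a
   concatenation without any case split in the definition. *)
Lemma joinable_trans A p q r : joinable A p q -> joinable A q r -> joinable A p r.
Proof.
move=> [g [gc g0 g1 gA]] [h [hc h0 h1 hA]].
exists (fun t => g (Num.min (2 * t) 1) + h (Num.max (2 * t - 1) 0) - q).
have double_cont : continuous (fun t : R => 2 * t).
  by move=> t; apply: cvgM; [exact: cvg_cst | exact: cvg_id].
split.
- move=> t; apply: cvgB; last exact: cvg_cst.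
  apply: cvgD; apply: continuous_comp; [|exact: gc| |exact: hc].
    apply: (@continuous_min R R (fun t => 2 * t) (fun=> 1)); last exact: cvg_cst.
    exact: double_cont.
  apply: (@continuous_max R R (fun t => 2 * t - 1) (fun=> 0)); last exact: cvg_cst.
  by apply: cvgB; [exact: double_cont | exact: cvg_cst].
- rewrite mulr0 (min_l ler01) (max_r (_ : 0 - 1 <= 0)) ?sub0r ?lerN10 //.
  by rewrite g0 h0 -g1 addrK.
- have -> : (2 : R) * 1 - 1 = 1 by lra.
  by rewrite mulr1 (min_r (_ : 1 <= 2)) ?ler1n // (max_l ler01) g1 h1 addrC addKr.
move=> t /andP[t0 t1].
have [ht|ht] := lerP (2 * t) 1.
  rewrite (max_r (_ : 2 * t - 1 <= 0)); last lra.
  by rewrite h0 addrK; apply: gA; apply/andP; split; lra.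
rewrite (max_l (_ : 0 <= 2 * t - 1)); last lra.
by rewrite g1 addrAC subrr add0r; apply: hA; apply/andP; split; lra.
Qed.

Lemma joinable_segment A p q :
  (forall l, 0 <= l <= 1 -> A (p + l *: (q - p))) -> joinable A p q.
Proof.
move=> H; exists (fun t => p + t *: (q - p)); split => //.
- move=> t; apply: cvgD; first exact: cvg_cst.
  by apply: cvgZ; [exact: cvg_id | exact: cvg_cst].
- by rewrite scale0r addr0.
- by rewrite scale1r addrC subrK.
Qed.

Lemma first_hit (g : R -> U) z : continuous g -> g 0 != z ->
    (exists2 t0, 0 <= t0 <= 1 & g t0 = z) ->
  exists t1, [/\ 0 < t1 <= 1, g t1 = z & forall t, 0 <= t < t1 -> g t != z].
Proof.
move=> gc g0z [t0 /andP[t00 t01] gt0].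
pose S := [set t : R | 0 <= t <= 1 /\ g t = z].
have St0 : S t0 by split => //; apply/andP.
have S0 : S !=set0 by exists t0.
have Slb : has_lbound S by exists 0 => t [/andP[]].
have inf_ge0 : 0 <= inf S by apply: lb_le_inf => // t [/andP[]].
have inf_le1 : inf S <= 1 by apply: le_trans (ge_inf Slb St0) t01.
have g_inf : g (inf S) = z.
  apply/eqP/negPn/negP => ne.
  have e0 : 0 < `|g (inf S) - z| by rewrite normr_gt0 subr_eq0.
  have /cvgrPdist_lt/(_ _ e0)/nbhs_ballP[r r0 Hr] := gc (inf S).
  have [t St tlt] := inf_adherent r0 (conj S0 Slb).
  have tge := ge_inf Slb St; case: St => _ gtz.
  have /Hr : ball (inf S) r t by rewrite -ball_normE /= ler0_norm ?subr_le0 //; lra.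
  by rewrite gtz ltxx.
exists (inf S); split => //.
- rewrite inf_le1 andbT lt_def inf_ge0 andbT.
  by apply: contra_neq g0z => <-.
move=> t /andP[t_ge0 tlt]; apply/eqP => gtz.
have : inf S <= t by apply: (ge_inf Slb); split => //; rewrite t_ge0 /=; lra.
lra.
Qed.

Lemma joinable_or_approach A z rho p q : 0 < rho -> ~ A z -> A p ->
    joinable (A `|` [set z]) p q ->
  joinable A p q \/ exists2 p', joinable A p p' & `|p' - z| < rho.
Proof.
move=> rho0 Az Ap [g [gc g0 g1 gAz]].
have gA t : 0 <= t <= 1 -> g t != z -> A (g t).
  by move=> /gAz[//|->]; rewrite eqxx.
have [[t0 t01 gt0]|nohit] := pselect (exists2 t0, 0 <= t0 <= 1 & g t0 = z); last first.
  left; exists g; split => // t t01; apply: gA => //.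
  by apply/eqP => gtz; apply: nohit; exists t.
right.
have g0z : g 0 != z by rewrite g0; apply: contra_not_neq Az => <-.
have [t1 [/andP[t1_gt0 t1_le1] gt1 before]] :=
  first_hit gc g0z (ex_intro2 _ _ t0 t01 gt0).
have /cvgrPdist_lt/(_ _ rho0)/nbhs_ballP[r r0 near_t1] := gc t1.
pose m := Num.min r t1.
have [mr mt1] : m <= r /\ m <= t1 by rewrite !ge_min !lexx orbT.
have m0 : 0 < m by rewrite lt_min r0 t1_gt0.
pose t2 := t1 - m / 2.
have [t2_ge0 t2_lt] : 0 <= t2 /\ t2 < t1 by rewrite /t2; split; lra.
exists (g t2).
  exists (fun s => g (s * t2)); split.
  - move=> s; apply: continuous_comp; last exact: gc.
    by apply: cvgM; [exact: cvg_id | exact: cvg_cst].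
  - by rewrite mul0r.
  - by rewrite mul1r.
  - move=> s /andP[s0 s1].
    have st2 : s * t2 <= t2 by rewrite ler_piMl.
    apply: gA; first by apply/andP; split; [exact: mulr_ge0 | lra].
    by apply: before; apply/andP; split; [exact: mulr_ge0 | lra].
rewrite -gt1 distrC; apply: near_t1.
by rewrite -ball_normE /= ger0_norm /t2; lra.
Qed.

Lemma joinable_punctured A z rho : 0 < rho -> ~ A z ->
    (forall p q, A p -> A q -> `|p - z| < rho -> `|q - z| < rho -> joinable A p q) ->
    (forall p q, A p -> A q -> joinable (A `|` [set z]) p q) ->
  forall p q, A p -> A q -> joinable A p q.
Proof.
move=> rho0 Az near_z joinz p q Ap Aq; have Jpq := joinz p q Ap Aq.
case: (joinable_or_approach rho0 Az Ap Jpq) => [//|[p' Jpp' p'z]].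
case: (joinable_or_approach rho0 Az Aq (joinable_sym Jpq)) =>
  [/joinable_sym//|[q' Jqq' q'z]].
have Jp'q' := near_z _ _ (joinable_end Jpp') (joinable_end Jqq') p'z q'z.
exact: joinable_trans Jpp' (joinable_trans Jp'q' (joinable_sym Jqq')).
Qed.

Lemma joinable_within A p q (g : R -> U) :
    {within `[0, 1], continuous g} -> g 0 = p -> g 1 = q ->
    (forall t, 0 <= t <= 1 -> A (g t)) ->
  joinable A p q.
Proof.
move=> /subspace_continuousP gc g0 g1 gA.
pose k t : R := Num.min (Num.max t 0) 1.
have k01 t : 0 <= k t <= 1.
  by rewrite le_min ler01 le_max lexx orbT ge_min lexx orbT.
have k_id t : 0 <= t <= 1 -> k t = t by move=> /andP[t0 t1]; rewrite /k max_l ?min_l.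
have kc : continuous k.
  move=> t; apply: (@continuous_min R R (fun t => Num.max t 0) (fun=> 1)).
    by apply: (@continuous_max R R id (fun=> 0)); [exact: cvg_id | exact: cvg_cst].
  exact: cvg_cst.
exists (g \o k); split => /=; rewrite ?k_id ?ler01 ?lexx //; last first.
  by move=> t _; apply: gA.
move=> t; have kt : `[0, 1]%classic (k t) by rewrite /= in_itv /= k01.
apply: cvg_trans (gc _ kt) => P gP.
have {}gP : nbhs (k t) (fun y => `[0, 1]%classic y -> P (g y)) := gP.
have := kc t _ gP; rewrite /= !nbhs_filterE /=; apply: filterS => y /=.
by apply; rewrite /= in_itv /= k01.
Qed.

End Joinable.

Section MeanValue.
Variables (R : realType) (U : normedModType R) (V : U -> R).
Hypothesis Vdiff : forall y, differentiable V y.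

Lemma derive_line (x v : U) (t : R) :
  is_derive t 1 (fun s : R => V (x + s *: v)) ('D_v V (x + t *: v)).
Proof.
have line_diff : is_diff t (fun s : R => x + s *: v) ( *:%R^~ v).
  by rewrite -[X in is_diff _ _ X](add0r ( *:%R^~ v)); apply: is_diffD.
have Vline_diff : differentiable (V \o (fun s : R => x + s *: v)) t.
  exact: differentiable_comp.
have Vline_derive : is_derive t 1 (V \o (fun s : R => x + s *: v))
    ('D_1 (V \o (fun s : R => x + s *: v)) t).
  exact/derivableP/derivable1_diffP.
apply: (is_derive_eq Vline_derive).
by rewrite deriveE // diff_comp //= diff_val scale1r deriveE.
Qed.

Lemma MVT_line (x v : U) :
  exists2 th, 0 <= th <= 1 & V (x + v) - V x = 'D_v V (x + th *: v).
Proof.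
have [||th] := @MVT_segment R (fun s => V (x + s *: v))
  (fun s => 'D_v V (x + s *: v)) 0 1 ler01.
- by move=> s _; apply: derive_line.
- apply: continuous_subspaceT => s; apply: differentiable_continuous.
  by case: (derive_line x v s) => /derivable1_diffP.
by rewrite in_itv /= scale1r scale0r addr0 subr0 mulr1 => th01 ->; exists th.
Qed.

Lemma derive_dirZ (y w : U) (k : R) : 'D_(k *: w) V y = k * 'D_w V y.
Proof. by rewrite !deriveE // linearZ. Qed.

Lemma derive_dirB (y w w' : U) : 'D_(w - w') V y = 'D_w V y - 'D_w' V y.
Proof. by rewrite !deriveE // linearB. Qed.

Lemma increment_le (z x v : U) (c r : R) :
    (forall y, `|y - z| < r -> forall w, 'D_w V y <= 'D_w V z + c * `|w|) ->
    (forall th, 0 <= th <= 1 -> `|x + th *: v - z| < r) ->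
  V (x + v) - V x <= 'D_v V z + c * `|v|.
Proof. by move=> Dnear seg; have [th /seg/Dnear Dth ->] := MVT_line x v. Qed.

End MeanValue.

Lemma segment_ball (R : realType) (U : normedModType R) (z p q : U) (r l : R) :
  `|p - z| < r -> `|q - z| < r -> 0 <= l <= 1 -> `|p + l *: (q - p) - z| < r.
Proof.
move=> pz qz /andP[l0 l1].
have -> : p + l *: (q - p) - z = (1 - l) *: (p - z) + l *: (q - z).
  rewrite scalerBl scale1r [RHS]addrAC -[RHS]addrA -scalerBr opprB addrA subrK.
  by rewrite [LHS]addrAC.
apply: le_lt_trans (ler_normD _ _) _.
rewrite !normrZ (ger0_norm l0) ger0_norm ?subr_ge0 //.
have [->|l_gt0] := eqVneq l 0; first by rewrite subr0 mul1r mul0r addr0.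
have : (1 - l) * `|p - z| <= (1 - l) * r by rewrite ler_wpM2l ?subr_ge0 // ltW.
have : l * `|q - z| < l * r by rewrite ltr_pM2l // lt_def l_gt0 l0.
lra.
Qed.

Section Descent.
Variables (R : realType) (U : normedModType R) (V : U -> R) (z h : U) (c rho : R).
Hypothesis Vdiff : forall y, differentiable V y.
Hypothesis c_ge0 : 0 <= c.
Hypothesis Dnear : forall y, `|y - z| < rho -> forall w, 'D_w V y <= 'D_w V z + c * `|w|.
Hypothesis hz_lt : `|h - z| < rho.
Hypothesis descent : 'D_(h - z) V z + c * (`|h - z| + 2 * rho) < 0.

Let center_in_ball : `|z - z| < rho.
Proof. by rewrite subrr normr0 (le_lt_trans _ hz_lt). Qed.

Lemma joinable_sublevel_center : joinable [set y | V y <= V z] h z.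
Proof.
apply: joinable_segment => l /andP[l0 l1] /=.
have -> : h + l *: (z - h) = z + (1 - l) *: (h - z).
  by rewrite scalerBl scale1r addrA [z + (h - z)]addrC subrK -scalerN opprB.
have : V (z + (1 - l) *: (h - z)) - V z <=
    'D_((1 - l) *: (h - z)) V z + c * `|(1 - l) *: (h - z)|.
  apply: (increment_le Vdiff Dnear) => th /andP[th0 th1].
  by rewrite scalerA; apply: segment_ball => //; apply/andP; split; nra.
rewrite (derive_dirZ Vdiff) normrZ ger0_norm ?subr_ge0 //.
have : (1 - l) * ('D_(h - z) V z + c * (`|h - z| + 2 * rho)) <= 0.
  by rewrite mulr_ge0_le0 ?subr_ge0 // ltW.
have : 0 <= (1 - l) * (c * rho).
  by rewrite !mulr_ge0 ?subr_ge0 // ltW // (le_lt_trans _ hz_lt).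
lra.
Qed.

Lemma joinable_sublevel_star p : `|p - z| < rho -> V p < V z ->
  joinable [set y | `|y - z| < rho /\ V y < V z] p h.
Proof.
move=> pz Vp; apply: joinable_segment => l /andP[l0 l1].
split; first by apply: segment_ball => //; apply/andP.
have : V (z + (p - z)) - V z <= 'D_(p - z) V z + c * `|p - z|.
  by apply: (increment_le Vdiff Dnear) => th th01; apply: segment_ball.
rewrite subrKC => inc_zp.
have : V (p + l *: (h - p)) - V p <= 'D_(l *: (h - p)) V z + c * `|l *: (h - p)|.
  apply: (increment_le Vdiff Dnear) => th /andP[th0 th1].
  by rewrite scalerA; apply: segment_ball => //; apply/andP; split; nra.
have hp : h - p = (h - z) - (p - z) by rewrite opprB addrA subrK.
rewrite (derive_dirZ Vdiff) hp (derive_dirB Vdiff) normrZ ger0_norm // -hp => inc_pw.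
have hp_le : `|h - p| <= `|h - z| + `|p - z| by rewrite hp ler_normB.
have [->|l_neq0] := eqVneq l 0; first by rewrite scale0r addr0.
have l_gt0 : 0 < l by rewrite lt_def l_neq0.
have f1 : 0 <= l * ('D_(p - z) V z + c * `|p - z| - (V p - V z)).
  by rewrite mulr_ge0 ?subr_ge0 // ltW.
have f2 : c * (l * `|h - p|) <= c * (l * (`|h - z| + `|p - z|)).
  by rewrite ler_wpM2l // ler_wpM2l // ltW.
have f3 : c * (l * `|p - z|) <= c * (l * rho) by rewrite ler_wpM2l // ler_wpM2l ?ltW.
have f4 : (1 - l) * (V p - V z) <= 0 by rewrite mulr_ge0_le0 ?subr_ge0 // ltW ?subr_lt0.
have f5 : l * ('D_(h - z) V z + c * (`|h - z| + 2 * rho)) < 0 by rewrite pmulr_rlt0.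
lra.
Qed.

End Descent.

Section RowNorm.
Variables (R : realType) (d : nat).
Implicit Types u : 'rV[R]_d.

Lemma mx_entry_le_norm m n (A : 'M[R]_(m, n)) i j : `|A i j| <= `|A|.
Proof.
rewrite [leRHS]/Num.norm /= mx_normrE; apply/bigmax_geP; right => /=.
by exists (i, j).
Qed.

Lemma sqr_norm_le_sum u : `|u| ^+ 2 <= \sum_i u 0 i ^+ 2.
Proof.
have [->|u0] := eqVneq `|u| 0.
  by rewrite expr0n /= sumr_ge0 // => i _; rewrite sqr_ge0.
have [[i j] /= uij] := mx_norm_neq0 u0.
have -> : `|u| = `|u i j| by exact: uij.
rewrite (ord1 i) (bigD1 j) //= real_normK ?num_real //.
by rewrite lerDl sumr_ge0 // => k _; rewrite sqr_ge0.
Qed.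

Lemma sum_sqr_le_norm u : \sum_i u 0 i ^+ 2 <= d%:R * `|u| ^+ 2.
Proof.
rewrite -[d in d%:R]card_ord -sum1_card natr_sum mulr_suml.
apply: ler_sum => i _; rewrite mul1r -real_normK ?num_real //.
by rewrite lerXn2r ?nnegrE // mx_entry_le_norm.
Qed.

End RowNorm.

Section Gradient.
Variables (R : realType) (d : nat) (V : 'rV[R]_d -> R).
Hypothesis Vdiff : forall y, differentiable V y.

Lemma derive_rowE (y v : 'rV[R]_d) :
  'D_v V y = \sum_i v 0 i * 'D_(basis_vec R i) V y.
Proof.
rewrite deriveE // {1}(row_sum_delta v) linear_sum.
by apply: eq_bigr => i _; rewrite linearZ -deriveE.
Qed.

Lemma sqr_norm_grad_le (y : 'rV[R]_d) : `|grad V y| ^+ 2 <= 'D_(grad V y) V y.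
Proof.
suff -> : 'D_(grad V y) V y = \sum_i grad V y 0 i ^+ 2 by apply: sqr_norm_le_sum.
by rewrite derive_rowE; apply: eq_bigr => i _; rewrite expr2 {2}/grad mxE.
Qed.

Hypothesis Dcont : forall i : 'I_d, continuous (fun x => 'D_(basis_vec R i) V x).

Lemma derive_near (z : 'rV[R]_d) (c : R) : 0 < c ->
  exists2 del : R, 0 < del & forall y, `|y - z| < del ->
    forall w, 'D_w V y <= 'D_w V z + c * `|w|.
Proof.
move=> c0; pose eps := c / (d%:R + 1).
have eps0 : 0 < eps by rewrite divr_gt0 ?ltr_wpDl.
have : \forall y \near z, forall i : 'I_d,
    `|'D_(basis_vec R i) V z - 'D_(basis_vec R i) V y| < eps.
  apply: (@filter_forall _ _
    (fun i y => `|'D_(basis_vec R i) V z - 'D_(basis_vec R i) V y| < eps)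
    (nbhs z) (nbhs_filter z)) => i.
  by have /cvgrPdist_lt := @Dcont i z; apply.
move=> /nbhs_ballP[del del0 near_z]; exists del => // y yz w.
have partial_close i : `|'D_(basis_vec R i) V y - 'D_(basis_vec R i) V z| <= eps.
  by rewrite distrC ltW //; apply: near_z; rewrite -ball_normE /= distrC.
rewrite -lerBlDl !derive_rowE -sumrB.
apply: le_trans (ler_norm _) _; apply: le_trans (ler_norm_sum _ _ _) _.
apply: (@le_trans _ _ (\sum_(i < d) `|w| * eps)).
  apply: ler_sum => i _; rewrite -mulrBr normrM.
  by apply: ler_pM => //; apply: mx_entry_le_norm.
rewrite sumr_const card_ord -mulr_natr -mulrA [c * _]mulrC ler_wpM2l //.
by rewrite /eps mulrAC ler_pdivrMr ?ltr_wpDl // ler_pM2l // lerDl.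
Qed.

Lemma descent_star (z : 'rV[R]_d) (r : R) : grad V z != 0 -> 0 < r ->
  exists rho, exists h, [/\ 0 < rho, rho <= r,
    forall p, `|p - z| < rho -> V p < V z ->
      joinable [set y | `|y - z| < rho /\ V y < V z] p h &
    joinable [set y | V y <= V z] h z].
Proof.
move=> u_neq0 r0; set u := grad V z; set N := `|u|.
have N0 : 0 < N by rewrite normr_gt0.
have [del del0 Dnear] := derive_near z (divr_gt0 N0 (ltr0n R 6)).
pose rho := Num.min del r.
have rho0 : 0 < rho by rewrite lt_min del0 r0.
have [rho_del rho_r] : rho <= del /\ rho <= r by rewrite !ge_min !lexx orbT.
pose s := rho / (2 * N).
have s0 : 0 < s by rewrite divr_gt0 // mulr_gt0.
pose h := z - s *: u.
have hz : h - z = (- s) *: u by rewrite /h addrAC subrr add0r scaleNr.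
have sN : s * N = rho / 2 by rewrite /s; field; rewrite gt_eqF.
have hz_norm : `|h - z| = rho / 2 by rewrite hz normrZ normrN gtr0_norm.
have Dh : 'D_(h - z) V z <= - (rho * N / 2).
  rewrite hz derive_dirZ // mulNr lerN2.
  apply: le_trans (ler_wpM2l (ltW s0) (sqr_norm_grad_le z)).
  by rewrite expr2 mulrA sN mulrAC.
have descent : 'D_(h - z) V z + N / 6 * (`|h - z| + 2 * rho) < 0.
  rewrite hz_norm; have : 0 < rho * N by rewrite mulr_gt0.
  lra.
have Dnear_rho y : `|y - z| < rho -> forall w, 'D_w V y <= 'D_w V z + N / 6 * `|w|.
  by move=> yz; apply: Dnear; apply: lt_le_trans rho_del.
have hz_lt : `|h - z| < rho by rewrite hz_norm; lra.
have c_ge0 : 0 <= N / 6 by rewrite divr_ge0 // ltW.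
exists rho, h; split => //.
  by move=> p; apply: (joinable_sublevel_star Vdiff c_ge0 Dnear_rho hz_lt descent).
exact: (joinable_sublevel_center Vdiff c_ge0 Dnear_rho hz_lt descent).
Qed.

End Gradient.

Section Valley.
Variables (R : realType) (d : nat).
Implicit Types (A : set 'rV[R]_d) (p q z : 'rV[R]_d).

Lemma path_connectedP A :
  path_connected A <-> forall p q, A p -> A q -> joinable A p q.
Proof.
split=> [pcA p q Ap Aq | jA p q Ap Aq].
  by have [g [[gc [g0 g1]] gA]] := pcA p q Ap Aq; apply: joinable_within gA.
have [g [gc g0 g1 gA]] := jA p q Ap Aq.
by exists g; split => //; split => //; apply: continuous_subspaceT.
Qed.

Lemma comm_height_sublevel (V : 'rV[R]_d -> R) p z :
  joinable [set y | V y <= V z] p z -> comm_height V p z = (V z)%:E.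
Proof.
move=> [g [gc g0 g1 gV]]; apply/eqP; rewrite eq_le; apply/andP; split.
  apply: (@le_trans _ _ (ereal_sup [set (V (g t))%:E | t in `[0, 1]])).
    by apply: ereal_inf_lbound; exists g => //; split; first exact: continuous_subspaceT.
  by apply: ge_ereal_sup => _ [t /= t01 <-]; rewrite lee_fin gV // -in_itv.
apply/ereal_infP => _ [f [_ [_ f1]] <-].
by apply: ereal_sup_ubound; exists 1 => //=; rewrite ?f1 // in_itv /= ler01 lexx.
Qed.

Lemma norm_ball_sub_eball z (eta : R) : 0 < eta ->
  exists2 r : R, 0 < r & forall y, `|y - z| < r -> eball z eta y.
Proof.
move=> eta0; have d1_gt0 : 0 < d%:R + 1 :> R by rewrite ltr_wpDl.
exists (eta / (d%:R + 1)); first exact: divr_gt0.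
move=> y yz; rewrite /eball /=; apply: le_lt_trans (sum_sqr_le_norm _) _.
have lt_eta : `|y - z| * (d%:R + 1) < eta by rewrite -ltr_pdivlMr.
have : (`|y - z| * (d%:R + 1)) ^+ 2 < eta ^+ 2.
  by rewrite ltrXn2r // ?nnegrE ?mulr_ge0 ?ltW // (le_lt_trans _ lt_eta) ?mulr_ge0 ?ltW.
have : d%:R * `|y - z| ^+ 2 <= (`|y - z| * (d%:R + 1)) ^+ 2.
  rewrite exprMn mulrC ler_wpM2l ?sqr_ge0 //.
  have : 0 <= d%:R :> R by [].
  nra.
lra.
Qed.

End Valley.

Theorem proposition2p5 (R : realType) (d : nat) (V : 'rV[R]_d -> R) (z : 'rV[R]_d)
  (Vcont : continuous V)
  (Vbdd : exists m : R, forall x, m <= V x)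
  (VC1 : C1 V)
  (hz : is_saddle V z) :
  grad V z = 0.
Proof.
case: VC1 => Vdiff Dcont; apply/eqP/negPn/negP => u_neq0.
case: hz => eta [eta0 [_ [not_pc pc]]].
have [r r0 in_eball] := norm_ball_sub_eball z eta0.
have [rho [h [rho0 rho_r star center]]] := descent_star Vdiff Dcont u_neq0 r0.
set A := open_valley V z `&` eball z eta.
have sublevel_A y : `|y - z| < rho -> V y < V z -> A y.
  move=> yz Vy; split; last by apply: in_eball; apply: lt_le_trans rho_r.
  split => //; apply: comm_height_sublevel.
  apply: joinable_trans center; apply: joinable_sub (star y yz Vy).
  by move=> w [_ /ltW].
apply/not_pc/path_connectedP; apply: (joinable_punctured (z := z) rho0).
- by move=> [[_]]; rewrite ltxx.
- move=> p q [[_ Vp] _] [[_ Vq] _] pz qz.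
  apply: joinable_sub (joinable_trans (star p pz Vp) (joinable_sym (star q qz Vq))).
  by move=> w [wz Vw]; apply: sublevel_A.
move=> p q [Op Bp] [Oq Bq].
have sub : (open_valley V z `|` [set z]) `&` eball z eta `<=` A `|` [set z].
  by move=> w [[Ow|->] Bw]; [left|right].
apply: joinable_sub sub _; move/path_connectedP: pc; apply; split => //; by left.
Qed.
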